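(* $conv\leq_{K}\mathcal{S}pl$.
   Context: $conv$ is the ideal on $\mathbb{Q}\cap[0,1]$ generated by sequences in $\mathbb{Q}\cap[0,1]$ converging in $[0,1]$. For an infinite $A\subseteq\omega$, let $S(A)$ be the set of all $\sigma\in2^{<\omega}$ such that $\sigma$ is constant on $A\cap\mathrm{dom}(\sigma)$. The splitting ideal $\mathcal{S}pl$ is the ideal on $2^{<\omega}$ generated by the sets $S(A)$, $A\in[\omega]^{\omega}$. For ideals $\mathcal{J}_0,\mathcal{J}_1$ on countable sets $X_0,X_1$, $\mathcal{J}_{0}\leq_{K}\mathcal{J}_{1}$ means there is a function $\pi:X_1\rightarrow X_0$ with $\pi^{-1}[A]\in\mathcal{J}_{1}$ for every $A\in\mathcal{J}_{0}$. *)

From Stdlib Require Import Reals QArith Qcanon List.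
Open Scope R_scope.

(* The countable set Q ∩ [0,1], using canonical rationals Qc (one element per rational). *)
Definition QI := { q : Qc | (0 <= q /\ q <= 1)%Qc }.
Definition QI2R (x : QI) : R := Q2R (this (proj1_sig x)).

(* 2^{<ω}: finite binary strings; dom σ = {0,...,length σ - 1}, σ(i) = nth i σ false. *)
Definition str := list bool.

Definition gen_ideal {X : Type} (G : (X -> Prop) -> Prop) (B : X -> Prop) : Prop :=
  exists l : list (X -> Prop), Forall G l /\
    forall x, B x -> exists C, In C l /\ C x.

Definition conv_gen (C : QI -> Prop) : Prop :=
  exists (f : nat -> QI) (l : R), 0 <= l <= 1 /\
    Un_cv (fun n => QI2R (f n)) l /\ (forall x, C x <-> exists n, f n = x).

Definition conv : (QI -> Prop) -> Prop := gen_ideal conv_gen.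

Definition infinite_nat (A : nat -> Prop) : Prop := forall n, exists m, (n <= m)%nat /\ A m.

Definition S_of (A : nat -> Prop) (s : str) : Prop :=
  forall i j, A i -> A j -> (i < length s)%nat -> (j < length s)%nat ->
    nth i s false = nth j s false.

Definition spl_gen (C : str -> Prop) : Prop :=
  exists A, infinite_nat A /\ (forall s, C s <-> S_of A s).

Definition Spl : (str -> Prop) -> Prop := gen_ideal spl_gen.

Definition katetov_le {X0 X1 : Type} (J0 : (X0 -> Prop) -> Prop) (J1 : (X1 -> Prop) -> Prop) : Prop :=
  exists pi : X1 -> X0, forall A, J0 A -> J1 (fun x => A (pi x)).

From Stdlib Require Import Reals QArith Qcanon List Qreals Lra Lia Classical IndefiniteDescription.
Open Scope R_scope.

(* Send a binary string to the rational whose base-5 digits are 2 (for 0) and 4 (for 1).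
   Strings whose codes are within 5^-K of each other agree on their first K places, so along a
   convergent sequence of codes every coordinate of the decoded strings is eventually constant.
   Pick infinitely many coordinates with the same eventual value q and thin them out to
   x_0 < x_1 < ..., where every string decoding a term before coordinate x_t has settled is
   shorter than x_(t+1).  A decoded string then has at most one unsettled x_t in its domain, so
   it is constant (equal to q) on the even-indexed or on the odd-indexed x_t. *)

Lemma gen_ideal_empty {X : Type} (G : (X -> Prop) -> Prop) : gen_ideal G (fun _ => False).
Proof. exists nil. split; [constructor | tauto]. Qed.

Lemma gen_ideal_subset {X : Type} (G : (X -> Prop) -> Prop) (B B' : X -> Prop) :
  gen_ideal G B -> (forall x, B' x -> B x) -> gen_ideal G B'.
Proof. intros [l [Hl HB]] Hsub. exists l. split; [exact Hl|]. intros x Hx. exact (HB x (Hsub x Hx)). Qed.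

Lemma gen_ideal_union {X : Type} (G : (X -> Prop) -> Prop) (B B' : X -> Prop) :
  gen_ideal G B -> gen_ideal G B' -> gen_ideal G (fun x => B x \/ B' x).
Proof.
  intros [l [Hl HB]] [l' [Hl' HB']]. exists (l ++ l'). split; [now apply Forall_app|].
  intros x [Hx | Hx].
  - destruct (HB x Hx) as [C [HC Cx]]. exists C. split; [apply in_or_app; now left | exact Cx].
  - destruct (HB' x Hx) as [C [HC Cx]]. exists C. split; [apply in_or_app; now right | exact Cx].
Qed.

Lemma katetov_le_gen_ideal {X0 X1 : Type} (G0 : (X0 -> Prop) -> Prop) (G1 : (X1 -> Prop) -> Prop)
  (pi : X1 -> X0) :
  (forall C, G0 C -> gen_ideal G1 (fun x => C (pi x))) -> katetov_le (gen_ideal G0) (gen_ideal G1).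
Proof.
  intros Hgen. exists pi. intros B [l [Hl HB]].
  apply gen_ideal_subset with (fun x => exists C, In C l /\ C (pi x)); [|intros x Hx; exact (HB _ Hx)].
  clear HB. induction Hl as [|C l HC _ IH].
  - apply gen_ideal_subset with (fun _ => False); [apply gen_ideal_empty | now intros x [C [[] _]]].
  - apply gen_ideal_subset with (fun x => C (pi x) \/ exists C', In C' l /\ C' (pi x)).
    + apply gen_ideal_union; [exact (Hgen C HC) | exact IH].
    + intros x [C' [[<- | HC'] Hx]]; [now left | right; now exists C'].
Qed.

Definition digit (b : bool) : R := if b then 4 else 2.

Fixpoint code (s : str) : R :=
  match s with nil => 0 | b :: s' => (digit b + code s') / 5 end.

Fixpoint codeQ (s : str) : Q :=
  match s with nil => 0 | b :: s' => ((if b then 4 else 2) + codeQ s') * (1 # 5) end%Q.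

Lemma Q2R_codeQ s : Q2R (codeQ s) = code s.
Proof.
  induction s as [|b s IH]; simpl.
  - unfold Q2R; simpl; field.
  - rewrite Q2R_mult, Q2R_plus, IH.
    destruct b; unfold digit, Q2R; simpl; field.
Qed.

Lemma code_bounds s : 0 <= code s <= 1.
Proof. induction s as [|[] s IH]; simpl; unfold digit; lra. Qed.

Lemma code_heads_differ s s' : hd_error s <> hd_error s' -> / 5 <= Rabs (code s - code s').
Proof.
  intro Hd.
  destruct s as [|[] l], s' as [|[] l']; simpl in *; try congruence;
    try pose proof (code_bounds l); try pose proof (code_bounds l');
    unfold digit, Rabs; destruct (Rcase_abs _); lra.
Qed.

Lemma code_close_agree K : forall s s', Rabs (code s - code s') * 5 ^ K < 1 ->
  forall i, (i < K)%nat -> nth_error s i = nth_error s' i.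
Proof.
  induction K as [|K IH]; intros s s' Hclose i Hi; [lia|].
  assert (H5K : 1 <= 5 ^ K) by (apply pow_R1_Rle; lra).
  assert (Hhd : hd_error s = hd_error s').
  { apply NNPP. intro Hd. apply code_heads_differ in Hd. simpl in Hclose.
    assert (Hfar : / 5 * (5 * 5 ^ K) <= Rabs (code s - code s') * (5 * 5 ^ K))
      by (apply Rmult_le_compat_r; lra).
    replace (/ 5 * (5 * 5 ^ K)) with (5 ^ K) in Hfar by field. lra. }
  destruct s as [|b l], s' as [|b' l']; simpl in Hhd; try discriminate; [reflexivity|].
  injection Hhd as <-. destruct i as [|i]; [reflexivity|]. simpl.
  apply IH; [|lia].
  assert (Hshift : Rabs (code (b :: l) - code (b :: l')) * 5 = Rabs (code l - code l')).
  { simpl. replace ((digit b + code l) / 5 - (digit b + code l') / 5) with ((code l - code l') * / 5)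
      by field.
    rewrite Rabs_mult, (Rabs_right (/ 5)) by lra. field. }
  rewrite <- Hshift, Rmult_assoc. exact Hclose.
Qed.

Lemma code_inj s s' : code s = code s' -> s = s'.
Proof.
  intro E. apply nth_error_ext. intro i. apply (code_close_agree (S i)); [|lia].
  replace (code s - code s') with 0 by lra. rewrite Rabs_R0. lra.
Qed.

Lemma Q2R_Q2Qc q : Q2R (Q2Qc q) = Q2R q.
Proof. apply Qeq_eqR, Qred_correct. Qed.

Lemma codeQ_in_unit s : (0 <= Q2Qc (codeQ s) /\ Q2Qc (codeQ s) <= 1)%Qc.
Proof.
  pose proof (code_bounds s).
  split; apply Rle_Qle; rewrite !Q2R_Q2Qc, Q2R_codeQ; unfold Q2R; simpl; lra.
Qed.

Definition code_pt (s : str) : QI := exist _ (Q2Qc (codeQ s)) (codeQ_in_unit s).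

Lemma QI2R_code_pt s : QI2R (code_pt s) = code s.
Proof. exact (eq_trans (Q2R_Q2Qc _) (Q2R_codeQ s)). Qed.

Lemma code_pt_inj s s' : code_pt s = code_pt s' -> s = s'.
Proof. intro E. apply code_inj. rewrite <- !QI2R_code_pt, E. reflexivity. Qed.

Definition digit_settles (f : nat -> QI) (q : bool) (x N : nat) : Prop :=
  forall s n, f n = code_pt s -> (N <= n)%nat -> (x < length s)%nat -> nth x s false = q.

Lemma preimage_length_bound (f : nat -> QI) N :
  exists M, forall s n, f n = code_pt s -> (n < N)%nat -> (length s <= M)%nat.
Proof.
  induction N as [|N [M HM]]; [exists 0%nat; intros; lia|].
  destruct (classic (exists s0, f N = code_pt s0)) as [[s0 E0] | Hnone].
  - exists (Nat.max M (length s0)). intros s n E Hn.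
    destruct (Nat.eq_dec n N) as [-> | Hne].
    + rewrite (code_pt_inj s s0) by congruence. lia.
    + specialize (HM s n E ltac:(lia)). lia.
  - exists M. intros s n E Hn.
    destruct (Nat.eq_dec n N) as [-> | Hne]; [exfalso; eauto | apply (HM s n E); lia].
Qed.

Section ConvergentSequence.

Variables (f : nat -> QI) (l : R).
Hypothesis f_cv : Un_cv (fun n => QI2R (f n)) l.

Lemma digit_settles_exists x : exists q N, digit_settles f q x N.
Proof.
  destruct (CV_Cauchy _ (exist _ l f_cv) (/ 5 ^ S x)) as [N HN].
  { apply Rlt_gt, Rinv_0_lt_compat, pow_lt; lra. }
  destruct (classic (exists s0 n0, f n0 = code_pt s0 /\ (N <= n0)%nat /\ (x < length s0)%nat))
    as [[s0 [n0 [E0 [N0 L0]]]] | Hnone].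
  - exists (nth x s0 false), N. intros s n E Hn L.
    assert (Hagree : nth_error s x = nth_error s0 x).
    { apply (code_close_agree (S x)); [|lia].
      rewrite <- !QI2R_code_pt, <- E, <- E0.
      specialize (HN n n0 Hn N0). unfold R_dist in HN.
      assert (P : 0 < 5 ^ S x) by (apply pow_lt; lra).
      apply (Rmult_lt_compat_r (5 ^ S x)) in HN; [|exact P]. rewrite Rinv_l in HN; lra. }
    rewrite (nth_error_nth' s false L), (nth_error_nth' s0 false L0) in Hagree.
    congruence.
  - exists true, N. intros s n E Hn L. exfalso. eauto 6.
Qed.

Lemma digit_settles_often : exists q, forall b, exists x N, (b < x)%nat /\ digit_settles f q x N.
Proof.
  destruct (classic (forall b, exists x N, (b < x)%nat /\ digit_settles f true x N))
    as [Htrue | Hfalse]; [now exists true|].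
  apply not_all_ex_not in Hfalse as [b0 Hb0].
  exists false. intro b.
  destruct (digit_settles_exists (S (Nat.max b b0))) as [[|] [N HN]].
  - exfalso. apply Hb0. exists (S (Nat.max b b0)), N. split; [lia | exact HN].
  - exists (S (Nat.max b b0)), N. split; [lia | exact HN].
Qed.

End ConvergentSequence.
Section Thinning.

Variables (f : nat -> QI) (q : bool) (x N M : nat -> nat).
Hypotheses (x_gt : forall b, (b < x b)%nat)
  (x_settles : forall b, digit_settles f q (x b) (N b))
  (M_bound : forall k s n, f n = code_pt s -> (n < k)%nat -> (length s <= M k)%nat).

Fixpoint stage (t : nat) : nat :=
  match t with O => O | S t => Nat.max (x (stage t)) (M (N (stage t))) end.

Let point (t : nat) : nat := x (stage t).
Let threshold (t : nat) : nat := N (stage t).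

Lemma point_lt_succ t : (point t < point (S t))%nat.
Proof. unfold point. pose proof (x_gt (stage (S t))). simpl in *. lia. Qed.

Lemma point_succ_le t t' : (t < t')%nat -> (point (S t) <= point t')%nat.
Proof.
  induction t' as [|t' IH]; intro Ht; [lia|].
  destruct (Nat.eq_dec t t') as [-> | Hne]; [lia|].
  pose proof (point_lt_succ t'). specialize (IH ltac:(lia)). lia.
Qed.

Lemma le_point t : (t <= point t)%nat.
Proof. induction t as [|t IH]; [lia|]. pose proof (point_lt_succ t). lia. Qed.

Lemma early_preimage_short t s n :
  f n = code_pt s -> (n < threshold t)%nat -> (length s < point (S t))%nat.
Proof.
  intros E Hn. pose proof (M_bound _ s n E Hn). pose proof (x_gt (stage (S t))).
  unfold point, threshold in *. simpl in *. lia.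
Qed.

Definition unsettled (s : str) (n t : nat) : Prop :=
  (point t < length s)%nat /\ (n < threshold t)%nat.

Lemma unsettled_unique s n t t' :
  f n = code_pt s -> unsettled s n t -> unsettled s n t' -> t = t'.
Proof.
  intros E [Lt Nt] [Lt' Nt'].
  destruct (Nat.lt_trichotomy t t') as [H | [H | H]]; [exfalso | exact H | exfalso].
  - pose proof (early_preimage_short t s n E Nt). pose proof (point_succ_le t t' H). lia.
  - pose proof (early_preimage_short t' s n E Nt'). pose proof (point_succ_le t' t H). lia.
Qed.

Definition parity_class (r i : nat) : Prop := exists t, i = point (2 * t + r).

Lemma parity_class_infinite r : infinite_nat (parity_class r).
Proof.
  intro n. exists (point (2 * n + r)). split; [|now exists n].
  pose proof (le_point (2 * n + r)). lia.
Qed.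

Lemma settled_parity_class_constant r s n : f n = code_pt s ->
  (forall u, ~ unsettled s n (2 * u + r)) -> S_of (parity_class r) s.
Proof.
  intros E Hsettled i j [u ->] [u' ->] Hi Hj.
  assert (Hq : forall u, (point (2 * u + r) < length s)%nat -> nth (point (2 * u + r)) s false = q).
  { intros v Hv. apply (x_settles _ s n E); [|exact Hv].
    apply Nat.nlt_ge. intro Hn. exact (Hsettled v (conj Hv Hn)). }
  now rewrite !Hq.
Qed.

Lemma preimage_in_parity_class s n :
  f n = code_pt s -> S_of (parity_class 0) s \/ S_of (parity_class 1) s.
Proof.
  intro E.
  destruct (classic (exists t0, unsettled s n t0)) as [[t0 H0] | Hnone].
  - destruct (Nat.Even_or_Odd t0) as [[m ->] | [m ->]]; [right | left];
      apply (settled_parity_class_constant _ _ n E); intros u Hu;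
      pose proof (unsettled_unique s n _ _ E Hu H0); lia.
  - left. apply (settled_parity_class_constant _ _ n E). intros u Hu. apply Hnone. eauto.
Qed.

Lemma thinning_splits_preimages : exists A0 A1, infinite_nat A0 /\ infinite_nat A1 /\
  forall s n, f n = code_pt s -> S_of A0 s \/ S_of A1 s.
Proof.
  exists (parity_class 0), (parity_class 1).
  split; [apply parity_class_infinite|]. split; [apply parity_class_infinite|].
  exact preimage_in_parity_class.
Qed.

End Thinning.

Lemma convergent_preimage_split (f : nat -> QI) (l : R) : Un_cv (fun n => QI2R (f n)) l ->
  exists A0 A1, infinite_nat A0 /\ infinite_nat A1 /\
    forall s n, f n = code_pt s -> S_of A0 s \/ S_of A1 s.
Proof.
  intro Hcv. destruct (digit_settles_often f l Hcv) as [q Hq].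
  destruct (functional_choice
    (fun b p => (b < fst p)%nat /\ digit_settles f q (fst p) (snd p))) as [p Hp].
  { intro b. destruct (Hq b) as [x [N H]]. now exists (x, N). }
  destruct (functional_choice (fun k M =>
    forall s n, f n = code_pt s -> (n < k)%nat -> (length s <= M)%nat)) as [M HM].
  { apply preimage_length_bound. }
  apply (thinning_splits_preimages f q (fun b => fst (p b)) (fun b => snd (p b)) M);
    [intro b; apply Hp | intro b; apply Hp | exact HM].
Qed.

Lemma conv_gen_preimage_Spl (C : QI -> Prop) : conv_gen C -> Spl (fun s => C (code_pt s)).
Proof.
  intros [f [l [_ [Hcv HC]]]].
  destruct (convergent_preimage_split f l Hcv) as (A0 & A1 & I0 & I1 & Hsplit).
  exists (S_of A0 :: S_of A1 :: nil). split.
  - repeat constructor; [exists A0 | exists A1]; tauto.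
  - intros s Hs. apply HC in Hs as [n Hn].
    destruct (Hsplit s n Hn); [exists (S_of A0) | exists (S_of A1)]; simpl; auto.
Qed.

Theorem mainTheorem7 : katetov_le conv Spl.
Proof. apply katetov_le_gen_ideal with code_pt. exact conv_gen_preimage_Spl. Qed.
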